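(* Let $\beta=0$, $R\ge0$, and let $D\ge4$ be even. For $n>0$ let $\alpha_\infty^n$ be the maximum value of $\alpha_0$ over all numerical walls for the Chern character $(-R,0,n,0)$ on $\mathbb{P}^3$. Then $\alpha_\infty^D=\alpha_\infty^{D-1}$. In particular, $D-2<\alpha_\infty^D\le D-1$.
   Context: On $\mathbb{P}^3$ with hyperplane class $H$, Chern characters are the vectors of coefficients of $1,H,H^2,H^3$. For $v=(-R,0,n,0)$ and the Bayer–Macrì–Toda stability conditions $\sigma_{0,\alpha,s}$ ($\alpha,s>0$; central charge $Z=-(\operatorname{ch}_3-(s+\frac16)\alpha^2\operatorname{ch}_1)+\sqrt{-1}(\operatorname{ch}_2-\frac{\alpha^2}{2}\operatorname{ch}_0)$), a numerical wall is a curve $(s+\frac16)\alpha^2=\alpha_0^2/6$ with $\alpha_0^2=6e/c$, where $(r,c,d,e)=\operatorname{ch}(A)$ for some $A\in D^b(\mathbb{P}^3)$ with $c>0$ satisfying $0<d<n$, $0<c(6e)\le\min\{4d^2,4(n-d)^2\}$, and $-\frac{c(2n-2d)}{6e}-R\le r\le\frac{2cd}{6e}$. *)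

From Stdlib Require Import Reals ZArith.
Open Scope R_scope.

(* Chern character of the line bundle O(k) on P^3, as the vector of
   coefficients of 1, H, H^2, H^3. *)
Definition ch_O (k : Z) : R * R * R * R :=
  (1, IZR k, IZR k ^ 2 / 2, IZR k ^ 3 / 6).

(* (r,c,d,e) is the Chern character of some object A of D^b(P^3).
   The image of ch : K_0(D^b(P^3)) -> Q^4 is the Z-span of
   ch(O), ch(O(1)), ch(O(2)), ch(O(3)) (Beilinson: these generate K_0(P^3)). *)
Definition is_ch_P3 (r c d e : R) : Prop :=
  exists a0 a1 a2 a3 : Z,
    let '(r0, c0, d0, e0) := ch_O 0 in
    let '(r1, c1, d1, e1) := ch_O 1 in
    let '(r2, c2, d2, e2) := ch_O 2 in
    let '(r3, c3, d3, e3) := ch_O 3 in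
    r = IZR a0 * r0 + IZR a1 * r1 + IZR a2 * r2 + IZR a3 * r3 /\
    c = IZR a0 * c0 + IZR a1 * c1 + IZR a2 * c2 + IZR a3 * c3 /\
    d = IZR a0 * d0 + IZR a1 * d1 + IZR a2 * d2 + IZR a3 * d3 /\
    e = IZR a0 * e0 + IZR a1 * e1 + IZR a2 * e2 + IZR a3 * e3.

(* alpha0 > 0 gives a numerical wall (s + 1/6) alpha^2 = alpha0^2 / 6 for
   v = (-Rk, 0, n, 0): alpha0^2 = 6e/c for some ch(A) = (r,c,d,e) satisfying
   the conditions of the paper. *)
Definition numerical_wall (Rk n alpha0 : R) : Prop :=
  exists r c d e : R,
    is_ch_P3 r c d e /\
    0 < c /\
    0 < d < n /\
    0 < c * (6 * e) <= Rmin (4 * d ^ 2) (4 * (n - d) ^ 2) /\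
    - (c * (2 * n - 2 * d)) / (6 * e) - Rk <= r <= 2 * c * d / (6 * e) /\
    alpha0 = sqrt (6 * e / c).

Definition is_alpha_inf (Rk n a : R) : Prop :=
  numerical_wall Rk n a /\ (forall b, numerical_wall Rk n b -> b <= a).

(* Chern characters on P^3 are exactly the (r, c, d, e) with r, c integers, d in c/2 + Z and
   6e in c + 6Z.  Let D = 2J and n in {2J-1, 2J}.  For c = 1, d is a half-integer in (0, n),
   so min(2d, 2(n-d)) <= 2J-1, and alpha0^2 = 6e is an integer = 1 mod 6 that is at most
   (2J-1)^2; the largest such integer is attained with d = J - 1/2.  For c >= 2 one only gets
   alpha0^2 = 6e/c <= c(6e)/4 <= (n/2)^2 <= J^2, which is smaller.  So alpha_inf^2 does not
   depend on n in {2J-1, 2J}, and it lies in ((2J-2)^2, (2J-1)^2]. *)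

From Stdlib Require Import Reals Arith.
From Stdlib Require Import Lra Lia Psatz ZArith.
Open Scope R_scope.

Ltac push_IZR := repeat rewrite ?plus_IZR, ?minus_IZR, ?mult_IZR.

Lemma is_ch_P3_iff (r c d e : R) :
  is_ch_P3 r c d e <->
  exists r0 m k t : Z,
    r = IZR r0 /\ c = IZR m /\ d = IZR m / 2 + IZR k /\ 6 * e = IZR m + 6 * IZR t.
Proof.
  unfold is_ch_P3, ch_O; split.
  - intros (a0 & a1 & a2 & a3 & Er & Ec & Ed & Ee).
    exists (a0 + a1 + a2 + a3)%Z, (a1 + 2 * a2 + 3 * a3)%Z, (a2 + 3 * a3)%Z, (a2 + 4 * a3)%Z.
    push_IZR; rewrite Er, Ec, Ed, Ee; repeat split; field.
  - intros (r0 & m & k & t & Er & Ec & Ed & Ee).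
    set (a3 := (t - k)%Z); set (a2 := (k - 3 * a3)%Z); set (a1 := (m - 2 * a2 - 3 * a3)%Z).
    exists (r0 - a1 - a2 - a3)%Z, a1, a2, a3.
    unfold a1, a2, a3; push_IZR; rewrite Er, Ec, Ed; repeat split; [field | field | field |].
    apply (Rmult_eq_reg_l 6); [rewrite Ee; field | lra].
Qed.

Lemma Rmin_sq_dist_le (n d : R) :
  0 < d < n -> Rmin (4 * d ^ 2) (4 * (n - d) ^ 2) <= n ^ 2.
Proof.
  intros Hd; destruct (Rle_dec d (n / 2)).
  - eapply Rle_trans; [apply Rmin_l | nra].
  - eapply Rle_trans; [apply Rmin_r | nra].
Qed.

(* Both 2d and 2(n - d) are odd integers when n is an integer and d a half-integer. *)
Lemma Rmin_sq_dist_half_integer_le (J k : Z) (n d : R) :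
  0 < d < n -> n <= 2 * IZR J -> d = IZR k + 1 / 2 ->
  Rmin (4 * d ^ 2) (4 * (n - d) ^ 2) <= (2 * IZR J - 1) ^ 2.
Proof.
  intros Hd Hn Hk.
  destruct (Z_le_gt_dec k (J - 1)) as [Hkj | Hkj].
  - assert (IZR k <= IZR J - 1) by (rewrite <- minus_IZR; apply IZR_le; exact Hkj).
    eapply Rle_trans; [apply Rmin_l | nra].
  - assert (IZR J <= IZR k) by (apply IZR_le; lia).
    eapply Rle_trans; [apply Rmin_r | nra].
Qed.

Lemma div_le_mul_div_4 (c x : R) : 2 <= c -> 0 < x -> x / c <= c * x / 4.
Proof.
  intros Hc Hx.
  apply Rmult_le_reg_l with (4 * c); [lra |].
  replace (4 * c * (x / c)) with (4 * x) by (field; lra).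
  replace (4 * c * (c * x / 4)) with (c * c * x) by field.
  assert (4 <= c * c) by nra.
  nra.
Qed.

(* alpha_inf^2 for D = 2J: the largest integer congruent to 1 mod 6 below (2J - 1)^2. *)
Definition alpha_inf_sq (J : Z) : Z := 6 * (2 * J * (J - 1) / 3) + 1.

Lemma alpha_inf_sq_bounds (J : Z) : (2 <= J)%Z ->
  ((2 * J - 2) * (2 * J - 2) < alpha_inf_sq J <= (2 * J - 1) * (2 * J - 1))%Z /\
  (J * J <= alpha_inf_sq J)%Z.
Proof.
  intros HJ; unfold alpha_inf_sq.
  pose proof (Z.div_mod (2 * J * (J - 1)) 3 ltac:(lia)).
  pose proof (Z.mod_pos_bound (2 * J * (J - 1)) 3 ltac:(lia)).
  set (Q := (2 * J * (J - 1) / 3)%Z) in *; set (rem := (2 * J * (J - 1) mod 3)%Z) in *.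
  assert (2 * J <= J * J)%Z by nia.
  split; [split |]; nia.
Qed.

Lemma alpha_inf_sq_max (J t : Z) :
  (6 * t + 1 <= (2 * J - 1) * (2 * J - 1))%Z -> (6 * t + 1 <= alpha_inf_sq J)%Z.
Proof.
  intros Ht; unfold alpha_inf_sq.
  pose proof (Z.div_mod (2 * J * (J - 1)) 3 ltac:(lia)).
  pose proof (Z.mod_pos_bound (2 * J * (J - 1)) 3 ltac:(lia)).
  set (Q := (2 * J * (J - 1) / 3)%Z) in *; set (rem := (2 * J * (J - 1) mod 3)%Z) in *.
  nia.
Qed.

Lemma numerical_wall_le (J : Z) (Rk n b : R) :
  (2 <= J)%Z -> n <= 2 * IZR J -> numerical_wall Rk n b -> b <= sqrt (IZR (alpha_inf_sq J)).
Proof.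
  intros HJ Hn (r & c & d & e & Hch & Hc & Hd & He & _ & ->).
  apply sqrt_le_1_alt.
  apply is_ch_P3_iff in Hch as (r0 & m & k & t & _ & Ec & Ed & Ee).
  destruct (alpha_inf_sq_bounds J HJ) as [_ HJsq].
  destruct (Z.eq_dec m 1) as [-> | Hm].
  - assert (Hd' : d = IZR k + 1 / 2) by (rewrite Ed; lra).
    pose proof (Rmin_sq_dist_half_integer_le J k n d Hd Hn Hd').
    assert (Ht : (6 * t + 1 <= (2 * J - 1) * (2 * J - 1))%Z).
    { apply le_IZR; push_IZR; rewrite Ec in He; lra. }
    apply alpha_inf_sq_max, IZR_le in Ht; rewrite plus_IZR, mult_IZR in Ht.
    rewrite Ec, Ee, Rdiv_1_r; push_IZR; lra.
  - rewrite Ec in Hc; apply lt_IZR in Hc.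
    assert (Hc2 : 2 <= c) by (rewrite Ec; apply IZR_le; lia).
    pose proof (Rmin_sq_dist_le n d Hd).
    pose proof (div_le_mul_div_4 c (6 * e) Hc2 ltac:(nra)).
    apply IZR_le in HJsq; rewrite mult_IZR in HJsq.
    assert (0 < n) by lra.
    nra.
Qed.

Lemma numerical_wall_rank_one (J t : Z) (Rk n : R) :
  (1 <= J)%Z -> (0 <= t)%Z -> (6 * t + 1 <= (2 * J - 1) * (2 * J - 1))%Z -> 0 <= Rk ->
  2 * IZR J - 1 <= n -> numerical_wall Rk n (sqrt (IZR (6 * t + 1))).
Proof.
  intros HJ Ht HtJ HRk Hn.
  apply IZR_le in HJ, Ht, HtJ.
  rewrite plus_IZR, !mult_IZR, minus_IZR, mult_IZR in HtJ.
  exists 0, 1, (IZR J - 1 / 2), ((6 * IZR t + 1) / 6).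
  split.
  { apply is_ch_P3_iff; exists 0%Z, 1%Z, (J - 1)%Z, t; push_IZR; repeat split; field. }
  split; [lra |]. split; [lra |]. split.
  { split; [lra |]. apply Rmin_glb; nra. }
  split.
  - split.
    + assert (0 < 1 * (2 * n - 2 * (IZR J - 1 / 2)) / (6 * ((6 * IZR t + 1) / 6)))
        by (apply Rdiv_lt_0_compat; lra).
      unfold Rdiv in *; lra.
    + left; apply Rdiv_lt_0_compat; lra.
  - f_equal; push_IZR; field.
Qed.

Lemma is_alpha_inf_even (J : Z) (Rk n : R) :
  (2 <= J)%Z -> 0 <= Rk -> 2 * IZR J - 1 <= n <= 2 * IZR J ->
  is_alpha_inf Rk n (sqrt (IZR (alpha_inf_sq J))).
Proof.
  intros HJ HRk Hn; split.
  - destruct (alpha_inf_sq_bounds J HJ) as [[_ Hle] _].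
    apply numerical_wall_rank_one with J; [lia | apply Z.div_pos; nia | exact Hle | lra | lra].
  - intros b; apply numerical_wall_le; [exact HJ | lra].
Qed.

Lemma sqrt_between (a x : R) : 1 <= x -> (x - 1) ^ 2 < a <= x ^ 2 -> x - 1 < sqrt a <= x.
Proof.
  intros Hx [Hlo Hhi]; split.
  - rewrite <- (sqrt_pow2 (x - 1)) by lra; apply sqrt_lt_1_alt; nra.
  - rewrite <- (sqrt_pow2 x) by lra; apply sqrt_le_1_alt; exact Hhi.
Qed.

Theorem lemma4p3 (Rk D : nat) (hD : (4 <= D)%nat) (hDeven : Nat.even D = true) :
  exists a : R,
    is_alpha_inf (INR Rk) (INR D) a /\
    is_alpha_inf (INR Rk) (INR (D - 1)) a /\
    INR D - 2 < a <= INR D - 1.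
Proof.
  apply Nat.even_spec in hDeven as [j Hj].
  set (J := Z.of_nat j).
  assert (HJ : (2 <= J)%Z) by lia.
  assert (HD : INR D = 2 * IZR J) by (rewrite Hj, mult_INR, (INR_IZR_INZ j); unfold J; simpl; ring).
  assert (HD1 : INR (D - 1) = 2 * IZR J - 1) by (rewrite minus_INR by lia; simpl; lra).
  pose proof (pos_INR Rk) as HRk.
  exists (sqrt (IZR (alpha_inf_sq J))).
  split; [| split].
  - apply is_alpha_inf_even; [exact HJ | exact HRk | lra].
  - apply is_alpha_inf_even; [exact HJ | exact HRk | lra].
  - destruct (alpha_inf_sq_bounds J HJ) as [[Hlo Hhi] _].
    apply IZR_lt in Hlo; apply IZR_le in Hhi; rewrite mult_IZR, minus_IZR, mult_IZR in Hlo, Hhi.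
    rewrite HD; replace (2 * IZR J - 2) with (2 * IZR J - 1 - 1) by ring.
    apply sqrt_between; [apply IZR_le in HJ; lra | split; nra].
Qed.
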